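(* Let $K$ be the field of fractions of a complete discrete valuation ring $\mathcal{O}$, and suppose $K$ has characteristic $3$ (the residue field may be infinite). In the coefficient-choosing game of degree $d = 3$ over $K$, whichever player makes the last move has a winning strategy.
   Context: The coefficient-choosing game of degree $d$ over $K$: Nora and Wanda alternately choose coefficients of $f(x) = a_d x^d + \cdots + a_0$; on each move the current player picks a not-yet-chosen coefficient and assigns it a value in $K$, subject to $a_d \neq 0$, $a_0 \neq 0$. After all $d+1$ coefficients are chosen, Wanda wins if $f$ has a root in $K$, and Nora wins otherwise. Who moves first is fixed in advance. *)

From HB Require Import structures.
From mathcomp Require Import all_boot all_order all_algebra.
Set Implicit Arguments. Unset Strict Implicit. Unset Printing Implicit Defensive.
Import Order.TTheory GRing.Theory Num.Theory.
Local Open Scope ring_scope.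

(* [vge v x N] : "v(x) >= N", with the convention v(0) = +oo. *)
Definition vge (K : fieldType) (v : K -> int) (x : K) (N : int) : Prop :=
  x = 0 \/ (N <= v x)%R.

(* v is a normalized discrete valuation on K (value on 0 irrelevant, = +oo
   by convention):  v(xy) = v x + v y,  v(x+y) >= min(v x, v y),
   and v takes the value 1 (hence the value group is Z). *)
Definition discrete_valuation (K : fieldType) (v : K -> int) : Prop :=
  [/\ (forall x y : K, x != 0 -> y != 0 -> v (x * y) = v x + v y),
      (forall x y : K, x != 0 -> y != 0 -> x + y != 0 ->
          (Order.min (v x) (v y) <= v (x + y))%R)
    & (exists pi : K, pi != 0 /\ v pi = 1)].

Definition v_complete (K : fieldType) (v : K -> int) : Prop :=
  forall u : nat -> K,
    (forall N : int, exists M : nat, forall m n : nat,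
        (M <= m)%N -> (M <= n)%N -> vge v (u m - u n) N) ->
    exists l : K, forall N : int, exists M : nat, forall n : nat,
        (M <= n)%N -> vge v (u n - l) N.

Definition val_ring (K : fieldType) (v : K -> int) : pred K :=
  fun x => (x == 0) || (0 <= v x)%R.

Inductive player := Nora | Wanda.

Definition other (p : player) : player :=
  match p with Nora => Wanda | Wanda => Nora end.

Definition player_eqb (p q : player) : bool :=
  match p, q with Nora, Nora | Wanda, Wanda => true | _, _ => false end.

(* a position: for each index i <= d, the coefficient a_i if already chosen *)
Definition position (K : fieldType) (d : nat) := 'I_d.+1 -> option K.

Definition start_pos (K : fieldType) (d : nat) : position K d := fun _ => None.

Definition legal_move (K : fieldType) (d : nat) (s : position K d)
    (i : 'I_d.+1) (c : K) : Prop :=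
  s i = None /\ ((nat_of_ord i = 0%N \/ nat_of_ord i = d) -> c != 0).

Definition play_move (K : fieldType) (d : nat) (s : position K d)
    (i : 'I_d.+1) (c : K) : position K d :=
  fun j => if j == i then Some c else s j.

Definition pos_poly (K : fieldType) (d : nat) (s : position K d) : {poly K} :=
  \poly_(i < d.+1) odflt 0 (s (inord i)).

Definition wins_outcome (K : fieldType) (d : nat) (W : player)
    (s : position K d) : Prop :=
  match W with
  | Wanda => exists x : K, root (pos_poly s) x
  | Nora => ~ (exists x : K, root (pos_poly s) x)
  end.

(* [can_force W n turn s]: from position s, with n moves left and player
   [turn] to move, player W can force a win (finite game of fixed length,
   so this nested exists/forall is exactly "W has a winning strategy"). *)
Fixpoint can_force (K : fieldType) (d : nat) (W : player) (n : nat)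
    (turn : player) (s : position K d) : Prop :=
  match n with
  | 0%N => wins_outcome W s
  | n'.+1 =>
      if player_eqb turn W then
        exists (i : 'I_d.+1) (c : K),
          legal_move s i c /\ can_force W n' (other turn) (play_move s i c)
      else
        forall (i : 'I_d.+1) (c : K),
          legal_move s i c -> can_force W n' (other turn) (play_move s i c)
  end.

Definition has_winning_strategy (K : fieldType) (d : nat) (W first : player)
    : Prop :=
  can_force W d.+1 first (@start_pos K d).

Definition last_mover (d : nat) (first : player) : player :=
  if odd d.+1 then first else other first.

From HB Require Import structures.
From mathcomp Require Import all_boot all_order all_algebra.
From mathcomp Require Import zify ring.
From Stdlib Require Import Classical.
Import Order.TTheory GRing.Theory Num.Theory.
Local Open Scope ring_scope.
Set Implicit Arguments. Unset Strict Implicit. Unset Printing Implicit Defensive.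

(* Four coefficients are chosen, so the last mover is the second player, who also
   makes the second move.  If she is Wanda, her second move does not matter: K is
   infinite, so for the last free coefficient a_k she takes a nonzero x that is not a
   root of the rest g of the polynomial and sets a_k = - g(x) / x^k.  If she is Nora,
   she zeroes a middle coefficient; up to x -> 1/x the final polynomial is then a
   depressed cubic c0 + c1 x + c3 x^3, and whichever of c0, c1, c3 is left she can
   choose so that the Newton polygon is a single segment of non-integral slope,
   which rules out roots.  The one exception is c1 with -c0/c3 = u^3 a cube; there,
   in characteristic 3, c0 + c3 x^3 = c3 (x - u)^3 and c1 = c3 u^2 pi gives an
   Eisenstein polynomial in x/u - 1. *)

Section DiscreteValuation.

Variables (K : fieldType) (v : K -> int).
Hypothesis v_discrete : discrete_valuation v.

Lemma valuationM x y : x != 0 -> y != 0 -> v (x * y) = v x + v y.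
Proof. by case: v_discrete => vM _ _; apply: vM. Qed.

Lemma valuation1 : v 1 = 0.
Proof.
have := valuationM (oner_neq0 K) (oner_neq0 K); rewrite mulr1 => e.
by apply: (addrI (v 1)); rewrite addr0 -e.
Qed.

Lemma valuationN x : x != 0 -> v (- x) = v x.
Proof.
move=> x0; have N1_neq0 : (-1 : K) != 0 by rewrite oppr_eq0 oner_neq0.
have := valuationM N1_neq0 N1_neq0; rewrite mulrNN mulr1 valuation1 => vN1.
by rewrite -mulN1r valuationM //; lia.
Qed.

Lemma valuationX x n : x != 0 -> v (x ^+ n) = n%:Z * v x.
Proof.
move=> x0; elim: n => [|n IHn]; first by rewrite expr0 valuation1 mul0r.
by rewrite exprS valuationM ?expf_neq0 // IHn intS mulrDl mul1r.
Qed.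

Lemma valuationV x : x != 0 -> v x^-1 = - v x.
Proof.
move=> x0; have := valuationM x0 (invr_neq0 x0).
by rewrite mulfV // valuation1; lia.
Qed.

Lemma vge_le x M N : N <= M -> vge v x M -> vge v x N.
Proof. by move=> NM [->|xM]; [left | right; lia]. Qed.

Lemma vgeM x y M N : vge v x M -> vge v y N -> vge v (x * y) (M + N).
Proof.
move=> [->|xM]; first by left; rewrite mul0r.
move=> [->|yN]; first by left; rewrite mulr0.
have [->|x0] := eqVneq x 0; first by left; rewrite mul0r.
have [->|y0] := eqVneq y 0; first by left; rewrite mulr0.
by right; rewrite valuationM //; lia.
Qed.

Lemma vgeD x y N : vge v x N -> vge v y N -> vge v (x + y) N.
Proof.
move=> [->|xN]; first by rewrite add0r.
move=> [->|yN]; first by rewrite addr0; right.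
have [->|x0] := eqVneq x 0; first by rewrite add0r; right.
have [->|y0] := eqVneq y 0; first by rewrite addr0; right.
have [->|xy0] := eqVneq (x + y) 0; first by left.
by right; case: v_discrete => _ /(_ x y x0 y0 xy0); lia.
Qed.

Lemma addr_vge_neq0 x y N : x != 0 -> v x < N -> vge v y N -> x + y != 0.
Proof.
move=> x0 xN [->|yN]; first by rewrite addr0.
apply/negP; rewrite addr_eq0 => /eqP xE; move: x0 xN.
by rewrite xE oppr_eq0 => y0; rewrite valuationN //; lia.
Qed.

Definition depressed_rootless (c0 c1 c3 : K) : Prop :=
  forall x, c0 + c1 * x + c3 * x ^+ 3 != 0.

(* The Newton polygon of c0 + c1 x + c3 x^3 is the segment from (0, v c0) to
   (3, v c3); its slope is not in Z, and c1 lies strictly above it. *)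
Lemma depressed_rootless_newton c0 c1 c3 N :
  c0 != 0 -> c3 != 0 -> ~~ (3 %| v c3 - v c0)%Z -> vge v c1 N ->
  2 * v c0 + v c3 < 3 * N -> depressed_rootless c0 c1 c3.
Proof.
move=> c0_neq0 c3_neq0 ndvd c1N above x.
have [->|x0] := eqVneq x 0; first by rewrite expr0n !mulr0 !addr0.
have vc3x : v (c3 * x ^+ 3) = v c3 + 3 * v x.
  by rewrite valuationM ?expf_neq0 // valuationX.
have c1x : vge v (c1 * x) (N + v x) by apply: vgeM; last right.
have [lt|gt|eq] := ltgtP (v c0) (v (c3 * x ^+ 3)).
- rewrite -addrA (addr_vge_neq0 (N := v c0 + 1)) //; first lia.
  by apply: vgeD; [apply: vge_le c1x; lia | right; lia].
- rewrite addrC (addr_vge_neq0 (N := v (c3 * x ^+ 3) + 1)) ?mulf_neq0 ?expf_neq0 //;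
    first lia.
  by apply: vgeD; [right; lia | apply: vge_le c1x; lia].
- by move: ndvd; rewrite eq vc3x; lia.
Qed.

Variable pi : K.
Hypotheses (pi_neq0 : pi != 0) (v_pi : v pi = 1).

Lemma uniformizer_exp_inj : injective (fun n : nat => pi ^+ n).
Proof.
move=> m n /(congr1 v); rewrite !valuationX // v_pi !mulr1.
by move=> /eqP; rewrite eqz_nat => /eqP.
Qed.

Lemma depressed_rootless_linear_coef c0 c3 : 3%N \in [pchar K] ->
  c0 != 0 -> c3 != 0 -> exists c1, depressed_rootless c0 c1 c3.
Proof.
move=> char3 c0_neq0 c3_neq0.
have [[u c0E]|no_cube] := classic (exists u, c0 = - (c3 * u ^+ 3)); last first.
  exists 0 => x; rewrite mul0r addr0; apply/eqP => c0x; apply: no_cube.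
  by exists x; apply/eqP; rewrite -addr_eq0 c0x.
have u0 : u != 0.
  by apply: contra_neq c0_neq0 => u0; rewrite c0E u0 expr0n /= mulr0 oppr0.
have eisenstein : depressed_rootless pi pi 1.
  apply: (depressed_rootless_newton (N := 1)); rewrite ?valuation1 ?v_pi ?oner_neq0 //.
  by right; rewrite v_pi.
exists (c3 * u ^+ 2 * pi) => x.
have -> : x = u * (1 + (x / u - 1)) by field.
move: (x / u - 1) => t; rewrite c0E.
have -> : - (c3 * u ^+ 3) + c3 * u ^+ 2 * pi * (u * (1 + t)) + c3 * (u * (1 + t)) ^+ 3
    = c3 * u ^+ 3 * (pi + pi * t + 1 * t ^+ 3) + 3%:R * (c3 * u ^+ 3 * (t + t ^+ 2)).
  by ring.
have three0 : 3%:R = 0 :> K := pcharf0 char3.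
by rewrite three0 mul0r addr0 mulf_neq0 // mulf_neq0 ?expf_neq0.
Qed.

(* In this lemma and the next, v c3 - v c0 is 1 mod 3 and the exponent n pushes the
   Newton segment below c1. *)
Lemma depressed_rootless_constant_coef c1 c3 : c3 != 0 ->
  exists2 c0, c0 != 0 & depressed_rootless c0 c1 c3.
Proof.
move=> c3_neq0; pose n := (3 * `|v c3 - v c1|).+1.
have pin_neq0 : pi ^+ n != 0 by rewrite expf_neq0.
have c0_neq0 : c3 / pi ^+ n != 0 by rewrite mulf_neq0 ?invr_eq0.
have vc0 : v (c3 / pi ^+ n) = v c3 - n%:Z.
  by rewrite valuationM ?invr_eq0 // valuationV // valuationX // v_pi mulr1.
exists (c3 / pi ^+ n) => //.
apply: (depressed_rootless_newton (N := v c1)) => //;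
  rewrite ?vc0 /n; [lia | by right | lia].
Qed.

Lemma depressed_rootless_leading_coef c0 c1 : c0 != 0 ->
  exists2 c3, c3 != 0 & depressed_rootless c0 c1 c3.
Proof.
move=> c0_neq0; pose n := (3 * `|v c0 - v c1|.+1)%N.
have pin_neq0 : pi ^+ n != 0 by rewrite expf_neq0.
have c3_neq0 : c0 * pi / pi ^+ n != 0 by rewrite !mulf_neq0 ?invr_eq0.
have vc3 : v (c0 * pi / pi ^+ n) = v c0 + 1 - n%:Z.
  by rewrite !valuationM ?mulf_neq0 ?invr_eq0 // valuationV // valuationX // v_pi mulr1.
exists (c0 * pi / pi ^+ n) => //.
apply: (depressed_rootless_newton (N := v c1)) => //;
  rewrite ?vc3 /n; [lia | by right | lia].
Qed.

End DiscreteValuation.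

Lemma depressed_rootless_reciprocal (K : fieldType) (c0 c2 c3 : K) :
  c0 != 0 -> depressed_rootless c3 c2 c0 ->
  forall x, c0 + c2 * x ^+ 2 + c3 * x ^+ 3 != 0.
Proof.
move=> c0_neq0 rootless x; have [->|x0] := eqVneq x 0.
  by rewrite !expr0n /= !mulr0 !addr0.
apply: contraNneq (rootless x^-1) => fx0.
have -> : c3 + c2 * x^-1 + c0 * x^-1 ^+ 3 = (c0 + c2 * x ^+ 2 + c3 * x ^+ 3) / x ^+ 3.
  by field.
by rewrite fx0 mul0r.
Qed.

Lemma exists_nonzero_nonroot (K : fieldType) (u : nat -> K) (p : {poly K}) :
  injective u -> p != 0 -> exists2 x, x != 0 & ~~ root p x.
Proof.
(* The extra root 0 of p * 'X forces the non-root found below to be nonzero. *)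
move=> u_inj p_neq0; have pX_neq0 : p * 'X != 0 by rewrite mulf_neq0 ?polyX_eq0.
have : ~~ all (root (p * 'X)) (mkseq u (size p).+1).
  apply/negP => /(max_poly_roots pX_neq0)/(_ (mkseq_uniq _ u_inj)).
  by rewrite size_mkseq size_mulX // ltnn.
case/allPn => x _; rewrite rootM rootX negb_or => /andP[px x0].
by exists x.
Qed.

Section Positions.

Variables (K : fieldType) (d : nat).
Implicit Types (s : position K d) (i j : 'I_d.+1) (c : K).

Definition holes s : {set 'I_d.+1} := [set i | s i == None].

Definition endpoints_neq0 s : Prop :=
  forall i c, s i = Some c -> (nat_of_ord i = 0%N \/ nat_of_ord i = d) -> c != 0.

Lemma card_holes_start : #|holes (@start_pos K d)| = d.+1.
Proof. by rewrite -[RHS]card_ord; apply: eq_card => i; rewrite inE. Qed.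

Lemma card_holes_play s i c :
  legal_move s i c -> #|holes (play_move s i c)| = #|holes s|.-1.
Proof.
case=> si _; rewrite (cardsD1 i (holes s)) inE si eqxx /=.
by apply: eq_card => j; rewrite !inE /play_move; case: (j == i).
Qed.

Lemma endpoints_neq0_play s i c :
  endpoints_neq0 s -> legal_move s i c -> endpoints_neq0 (play_move s i c).
Proof.
move=> hs [_ hc] j c'; rewrite /play_move.
by case: eqP => [-> [<-] | _]; [exact: hc | exact: hs].
Qed.

Lemma play_move_filled s i c j c' :
  legal_move s i c -> s j = Some c' -> play_move s i c j = Some c'.
Proof. by case=> si _ sj; rewrite /play_move; case: eqP => // ji; rewrite ji si in sj. Qed.

Lemma coef_pos_poly s k : (k <= d)%N -> (pos_poly s)`_k = odflt 0 (s (inord k)).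
Proof. by move=> kd; rewrite coef_poly ltnS kd. Qed.

Lemma pos_poly_play s i c :
  s i = None -> pos_poly (play_move s i c) = pos_poly s + c *: 'X^i.
Proof.
move=> si; apply/polyP => k; rewrite coefD coefZ coefXn !coef_poly.
have [kd|dk] := ltnP k d.+1; last first.
  by rewrite gtn_eqF ?mulr0 ?addr0 // (leq_trans (ltn_ord i)).
rewrite /play_move -(inj_eq val_inj) /= inordK //.
by case: eqP => [->|_]; rewrite ?inord_val ?si ?mulr1 ?add0r ?mulr0 ?addr0.
Qed.

Lemma coef_pos_poly_play s i c k : s i = None ->
  (pos_poly (play_move s i c))`_k = if k == i then c else (pos_poly s)`_k.
Proof.
move=> si; rewrite pos_poly_play // coefD coefZ coefXn.
case: eqP => [->|_]; last by rewrite mulr0 addr0.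
by rewrite coef_pos_poly ?inord_val ?si ?add0r ?mulr1 // -ltnS.
Qed.

Lemma single_hole_free s i : holes s = [set i] -> s i = None.
Proof. by move=> hi; have := set11 i; rewrite -hi inE => /eqP. Qed.

Lemma coef_endpoint_neq0 s i k : endpoints_neq0 s -> holes s = [set i] ->
  (k = 0 \/ k = d)%N -> nat_of_ord i != k -> (pos_poly s)`_k != 0.
Proof.
move=> hs hi k_end ik; have kd : (k <= d)%N by case: k_end => ->.
have ki : inord k != i by rewrite -(inj_eq val_inj) /= inordK ?ltnS // eq_sym.
rewrite coef_pos_poly //; case sk: (s (inord k)) => [c|] /=.
  by apply: (hs _ _ sk); rewrite inordK ?ltnS.
by move: ki; rewrite -in_set1 -hi inE sk.
Qed.

Lemma wanda_last_move (u : nat -> K) s i : injective u ->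
  s i = None -> pos_poly s != 0 ->
  exists c, legal_move s i c /\ wins_outcome Wanda (play_move s i c).
Proof.
move=> u_inj si p_neq0; have [x x0 px] := exists_nonzero_nonroot u_inj p_neq0.
exists (- (pos_poly s).[x] / x ^+ i); split.
  by split=> // _; rewrite mulf_neq0 ?oppr_eq0 ?invr_eq0 ?expf_neq0.
exists x; rewrite /root pos_poly_play // hornerD hornerZ hornerXn.
by rewrite mulfVK ?expf_neq0 // addrN.
Qed.

Lemma pos_poly_neq0 s i : (0 < d)%N -> endpoints_neq0 s -> holes s = [set i] ->
  pos_poly s != 0.
Proof.
move=> d_gt0 hs hi; have [i0|i_neq0] := eqVneq (nat_of_ord i) 0%N.
  apply: contraNneq (coef_endpoint_neq0 hs hi (or_intror erefl) _) => [->|]; first by rewrite coef0.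
  by rewrite i0 eq_sym -lt0n.
by apply: contraNneq (coef_endpoint_neq0 hs hi (or_introl erefl) i_neq0) => ->; rewrite coef0.
Qed.

Lemma exists_legal_move s : (0 < #|holes s|)%N -> exists j c, legal_move s j c.
Proof.
case/card_gt0P => j; rewrite inE => /eqP sj.
by exists j, 1; split=> // _; apply: oner_neq0.
Qed.

End Positions.

Lemma last_mover_wins (K : fieldType) (first : player) (P : position K 3 -> Prop) :
  (forall (i : 'I_4) (c : K), legal_move (@start_pos K 3) i c -> exists j c',
     legal_move (play_move (@start_pos K 3) i c) j c' /\
     P (play_move (play_move (@start_pos K 3) i c) j c')) ->
  (forall s (i : 'I_4) c, legal_move s i c -> P s -> P (play_move s i c)) ->
  (forall s i, endpoints_neq0 s -> holes s = [set i] -> P s ->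
     exists c, legal_move s i c /\ wins_outcome (other first) (play_move s i c)) ->
  has_winning_strategy K 3 (last_mover 3 first) first.
Proof.
move=> reply P_play finish.
suff endgame i1 c1 i2 c2 i3 c3 :
    let s1 := play_move (@start_pos K 3) i1 c1 in let s2 := play_move s1 i2 c2 in
    legal_move (@start_pos K 3) i1 c1 -> legal_move s1 i2 c2 -> legal_move s2 i3 c3 ->
    P s2 -> exists i c, legal_move (play_move s2 i3 c3) i c /\
                        wins_outcome (other first) (play_move (play_move s2 i3 c3) i c).
  rewrite /has_winning_strategy /last_mover /=.
  case: first finish endgame => /= finish endgame i1 c1 l1;
    have [i2 [c2 [l2 P2]]] := reply i1 c1 l1;
    by exists i2, c2; split=> // i3 c3 l3; apply: endgame.
move=> s1 s2 l1 l2 l3 P2.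
have s3_end : endpoints_neq0 (play_move s2 i3 c3).
  do 3![apply: endpoints_neq0_play => //]; by move=> ? ? [].
have : #|holes (play_move s2 i3 c3)| == 1%N.
  by rewrite !card_holes_play // card_holes_start.
case/cards1P => i hi; have [c [lc win]] := finish _ _ s3_end hi (P_play _ _ _ l3 P2).
by exists i, c.
Qed.

Lemma horner_size4 (R : nzSemiRingType) (p : {poly R}) x : (size p <= 4)%N ->
  p.[x] = p`_0 + p`_1 * x + p`_2 * x ^+ 2 + p`_3 * x ^+ 3.
Proof.
move=> sp; rewrite (horner_coef_wide _ sp) !big_ord_recr big_ord0 /=.
by rewrite add0r expr0 mulr1 expr1.
Qed.

Section NoraStrategy.

Variable K : fieldType.
Implicit Types (s : position K 3) (i : 'I_4) (c : K).

Definition middle_zero s : Prop := s (inord 1) = Some 0 \/ s (inord 2) = Some 0.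

Lemma middle_zero_play s i c :
  legal_move s i c -> middle_zero s -> middle_zero (play_move s i c).
Proof. by move=> l [m|m]; [left | right]; apply: play_move_filled l m. Qed.

Lemma exists_middle_zero_reply i c : exists j c',
  legal_move (play_move (@start_pos K 3) i c) j c' /\
  middle_zero (play_move (play_move (@start_pos K 3) i c) j c').
Proof.
have [m [m_mid mi]] : exists m : 'I_4, (m = inord 1 \/ m = inord 2) /\ m != i.
  have [->|i2] := eqVneq i (inord 2); last by exists (inord 2); split; [right | rewrite eq_sym].
  by exists (inord 1); split; [left | rewrite -(inj_eq val_inj) /= !inordK].
exists m, 0; split.
  split; first by rewrite /play_move (negbTE mi).
  by case: m_mid => ->; rewrite inordK // => -[].
by case: m_mid => ->; [left | right]; rewrite /play_move eqxx.
Qed.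

Lemma nora_wins_of_rootless s :
  (forall x, (pos_poly s)`_0 + (pos_poly s)`_1 * x + (pos_poly s)`_2 * x ^+ 2
             + (pos_poly s)`_3 * x ^+ 3 != 0) ->
  wins_outcome Nora s.
Proof. by move=> H [x]; rewrite /root horner_size4 ?size_poly // (negbTE (H x)). Qed.

Variables (v : K -> int) (pi : K).
Hypotheses (v_discrete : discrete_valuation v) (pi_neq0 : pi != 0) (v_pi : v pi = 1).
Hypothesis char3 : 3%N \in [pchar K].

Lemma nora_last_move_coef2_zero s i : endpoints_neq0 s -> holes s = [set i] ->
  s (inord 2) = Some 0 -> exists c, legal_move s i c /\ wins_outcome Nora (play_move s i c).
Proof.
move=> hs hi s2; have si := single_hole_free hi.
have p2 : (pos_poly s)`_2 = 0 by rewrite coef_pos_poly // s2.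
have i2 : nat_of_ord i != 2%N.
  apply: contraPneq s2 => i2; rewrite (_ : inord 2 = i) ?si //.
  by apply: val_inj; rewrite /= inordK ?i2.
have end0 := coef_endpoint_neq0 hs hi (or_introl erefl).
have end3 := coef_endpoint_neq0 hs hi (or_intror erefl).
case: i => [[|[|[|[|k]]]] ik] //= in hi si end0 end3 i2 *.
- have [c c_neq0 H] := depressed_rootless_constant_coef v_discrete pi_neq0 v_pi
                         (pos_poly s)`_1 (end3 isT).
  exists c; split; first by split=> // _.
  by apply: nora_wins_of_rootless => x; rewrite !coef_pos_poly_play //= p2 mul0r addr0.
- have [c H] := depressed_rootless_linear_coef v_discrete pi_neq0 v_pi char3
                  (end0 isT) (end3 isT).
  exists c; split; first by split=> // -[].
  by apply: nora_wins_of_rootless => x; rewrite !coef_pos_poly_play //= p2 mul0r addr0.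
- have [c c_neq0 H] := depressed_rootless_leading_coef v_discrete pi_neq0 v_pi
                         (pos_poly s)`_1 (end0 isT).
  exists c; split; first by split=> // _.
  by apply: nora_wins_of_rootless => x; rewrite !coef_pos_poly_play //= p2 mul0r addr0.
Qed.

Lemma nora_last_move_coef1_zero s i : endpoints_neq0 s -> holes s = [set i] ->
  s (inord 1) = Some 0 -> exists c, legal_move s i c /\ wins_outcome Nora (play_move s i c).
Proof.
move=> hs hi s1; have si := single_hole_free hi.
have p1 : (pos_poly s)`_1 = 0 by rewrite coef_pos_poly // s1.
have i1 : nat_of_ord i != 1%N.
  apply: contraPneq s1 => i1; rewrite (_ : inord 1 = i) ?si //.
  by apply: val_inj; rewrite /= inordK ?i1.
have end0 := coef_endpoint_neq0 hs hi (or_introl erefl).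
have end3 := coef_endpoint_neq0 hs hi (or_intror erefl).
case: i => [[|[|[|[|k]]]] ik] //= in hi si end0 end3 i1 *.
- have [c c_neq0 H] := depressed_rootless_leading_coef v_discrete pi_neq0 v_pi
                         (pos_poly s)`_2 (end3 isT).
  exists c; split; first by split=> // _.
  apply: nora_wins_of_rootless => x; rewrite !coef_pos_poly_play //= p1 mul0r addr0.
  exact: depressed_rootless_reciprocal c_neq0 H x.
- have [c H] := depressed_rootless_linear_coef v_discrete pi_neq0 v_pi char3
                  (end3 isT) (end0 isT).
  exists c; split; first by split=> // -[].
  apply: nora_wins_of_rootless => x; rewrite !coef_pos_poly_play //= p1 mul0r addr0.
  exact: depressed_rootless_reciprocal (end0 isT) H x.
- have [c c_neq0 H] := depressed_rootless_constant_coef v_discrete pi_neq0 v_pi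
                         (pos_poly s)`_2 (end0 isT).
  exists c; split; first by split=> // _.
  apply: nora_wins_of_rootless => x; rewrite !coef_pos_poly_play //= p1 mul0r addr0.
  exact: depressed_rootless_reciprocal (end0 isT) H x.
Qed.

Lemma nora_last_move s i : endpoints_neq0 s -> holes s = [set i] -> middle_zero s ->
  exists c, legal_move s i c /\ wins_outcome Nora (play_move s i c).
Proof.
by move=> hs hi [];
  [apply: nora_last_move_coef1_zero hs hi | apply: nora_last_move_coef2_zero hs hi].
Qed.

End NoraStrategy.

Theorem lemma14 (K : fieldType) (v : K -> int)
    (Hv : discrete_valuation v) (Hcomplete : v_complete v)
    (Hchar : 3%N \in [pchar K]) (first : player) :
  has_winning_strategy K 3 (last_mover 3 first) first.
Proof.
have [pi [pi_neq0 v_pi]] : exists pi : K, pi != 0 /\ v pi = 1 by case: Hv.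
case: first.
- apply: (last_mover_wins (P := fun _ => True)) => // [i c l | s i hs hi _].
    have [|j [c' lj]] := @exists_legal_move _ _ (play_move (@start_pos K 3) i c).
      by rewrite card_holes_play // card_holes_start.
    by exists j, c'.
  apply: wanda_last_move (uniformizer_exp_inj Hv pi_neq0 v_pi) _ _.
    exact: single_hole_free hi.
  exact: pos_poly_neq0 hs hi.
- apply: (last_mover_wins (P := @middle_zero K)) => [i c _ | |].
  + exact: exists_middle_zero_reply.
  + exact: middle_zero_play.
  + exact: nora_last_move Hv pi_neq0 v_pi Hchar.
Qed.
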